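(* Let $d \geq 2$ and $n_1,\dots,n_d \geq 1$ be integers, and let $G_1$ and $G_2$ be graphs with non-empty vertex sets and maximum degrees $\Delta_1$ and $\Delta_2$ respectively. Then $K_{n_1,\dots,n_d}$ is isomorphic to a subgraph of $G_1 \square G_2$ if and only if at least one of the following holds: (i) $K_{n_1,\dots,n_d}$ is isomorphic to a subgraph of $G_1$ or of $G_2$; (ii) $d=2$, $(n_1,n_2)=(2,2)$, and both $G_1$ and $G_2$ contain at least one edge; (iii) $d=2$, $\{n_1,n_2\}=\{1,s\}$ for some integer $s\geq 1$, and $\Delta_1+\Delta_2 \geq s$.
   Context: The cartesian product $G_1 \square G_2$ has vertex set $V(G_1)\times V(G_2)$, with $(a,v)(b,u)$ an edge iff either $ab\in E(G_1)$ and $u=v$, or $uv\in E(G_2)$ and $a=b$. $K_{n_1,\dots,n_d}$ denotes the complete $d$-partite graph with parts of sizes $n_1,\dots,n_d$. *)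

From mathcomp Require Import all_boot.
Set Implicit Arguments. Unset Strict Implicit. Unset Printing Implicit Defensive.

Definition simple_graph (V : finType) (e : rel V) : Prop :=
  symmetric e /\ irreflexive e.

Definition deg (V : finType) (e : rel V) (v : V) : nat := #|[set u | e v u]|.
Definition maxdeg (V : finType) (e : rel V) : nat := \max_(v : V) deg e v.

Definition subgraph_iso (W V : finType) (eH : rel W) (eG : rel V) : Prop :=
  exists f : W -> V, injective f /\ forall x y, eH x y -> eG (f x) (f y).

(* complete d-partite graph K_{n_1,...,n_d}: vertices are pairs (i, k) with
   k < n i, adjacent iff they lie in different parts *)
Definition Kmp_vert (d : nat) (n : 'I_d -> nat) : finType :=
  {i : 'I_d & 'I_(n i)}.
Definition Kmp_rel (d : nat) (n : 'I_d -> nat) : rel (Kmp_vert n) :=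
  fun x y => tag x != tag y.

Definition cart_rel (V1 V2 : finType) (e1 : rel V1) (e2 : rel V2)
  : rel (V1 * V2) :=
  fun p q => (e1 p.1 q.1 && (p.2 == q.2)) || (e2 p.2 q.2 && (p.1 == q.1)).

Definition has_edge (V : finType) (e : rel V) : Prop := exists x y, e x y.

From mathcomp Require Import all_boot zify.
Set Implicit Arguments. Unset Strict Implicit. Unset Printing Implicit Defensive.

(* An edge of G1 □ G2 is horizontal (second coordinates equal) or vertical,
   and a triangle cannot mix the two kinds.  Hence for d >= 3 the image of
   K_{n_1,...,n_d} spreads from one triangle into a single fibre, which is a
   copy of G1 or G2.  For d = 2, a part of size one is the centre of a star,
   and a vertex (a, b) of G1 □ G2 has degree deg a + deg b.  If both parts
   have at least two vertices and the image leaves a fibre, some vertex has a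
   horizontal and a vertical neighbour; two vertices differing in both
   coordinates have only two common neighbours, which forces K_{2,2}.
   Conversely K_{2,2} is the 4-cycle K_2 □ K_2. *)

Lemma simple_graph_neq (V : finType) (e : rel V) x y : simple_graph e -> e x y -> x != y.
Proof. by case=> _ irr; apply: contraTneq => ->; rewrite irr. Qed.

Lemma mem_set2_neq (T : finType) (a b x y : T) :
  x \in [set a; b] -> y \in [set a; b] -> x != y -> (x, y) = (a, b) \/ (x, y) = (b, a).
Proof. by rewrite !inE => /orP[]/eqP-> /orP[]/eqP->; rewrite ?eqxx; auto. Qed.

Section CartesianProduct.
Variables (V1 V2 : finType) (e1 : rel V1) (e2 : rel V2).
Implicit Types p q r w : V1 * V2.

Lemma cart_relP p q :
  cart_rel e1 e2 p q -> (e1 p.1 q.1 /\ p.2 = q.2) \/ (e2 p.2 q.2 /\ p.1 = q.1).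
Proof. by case/orP=> /andP[? /eqP]; auto. Qed.

Lemma cart_rel_swap p q :
  cart_rel e2 e1 (swap_pair p) (swap_pair q) = cart_rel e1 e2 p q.
Proof. exact: orbC. Qed.

Lemma cart_common_nbr p r w : p.1 != r.1 -> p.2 != r.2 ->
  cart_rel e1 e2 p w -> cart_rel e1 e2 r w -> w \in [set (p.1, r.2); (r.1, p.2)].
Proof.
case: p r w => [p1 p2] [r1 r2] [w1 w2] /= np1 np2.
move=> /cart_relP[[_ /= E1]|[_ /= E1]] /cart_relP[[_ /= E2]|[_ /= E2]]; subst;
  by rewrite ?eqxx in np1 np2 *; rewrite !inE ?eqxx ?orbT.
Qed.

Definition cart_nbr p := [set q | cart_rel e1 e2 p q].

Hypotheses (e1_simple : simple_graph e1) (e2_simple : simple_graph e2).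
Let e1_irr : irreflexive e1 := proj2 e1_simple.
Let e2_irr : irreflexive e2 := proj2 e2_simple.

Lemma cart_rel_sym : symmetric (cart_rel e1 e2).
Proof.
case: e1_simple e2_simple => [sym1 _] [sym2 _] p q.
by rewrite /cart_rel sym1 sym2 (eq_sym p.1) (eq_sym p.2).
Qed.

Lemma cart_rel_irr : irreflexive (cart_rel e1 e2).
Proof. by move=> p; rewrite /cart_rel e1_irr e2_irr. Qed.

Lemma cart_rel_snd_eq p q : cart_rel e1 e2 p q -> p.2 = q.2 -> e1 p.1 q.1.
Proof. by case/cart_relP=> [[]//|[e _] E]; rewrite E e2_irr in e. Qed.

Lemma cart_rel_fst_eq p q : cart_rel e1 e2 p q -> p.1 = q.1 -> e2 p.2 q.2.
Proof. by case/cart_relP=> [[e _] E|[]//]; rewrite E e1_irr in e. Qed.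

Lemma cart_triangle p q r :
  cart_rel e1 e2 p q -> cart_rel e1 e2 q r -> cart_rel e1 e2 p r ->
  (p.2 = q.2 /\ q.2 = r.2) \/ (p.1 = q.1 /\ q.1 = r.1).
Proof.
case: p q r => [p1 p2] [q1 q2] [r1 r2].
move=> /cart_relP[[h1 /= ?]|[h1 /= ?]] /cart_relP[[h2 /= ?]|[h2 /= ?]]
  /cart_relP[[h3 /= ?]|[h3 /= ?]]; subst; rewrite ?e1_irr ?e2_irr // in h1 h2 h3; auto.
Qed.

Lemma card_cart_nbr a b : #|cart_nbr (a, b)| = deg e1 a + deg e2 b.
Proof.
set N1 := [set u | e1 a u]; set N2 := [set w | e2 b w].
have -> : cart_nbr (a, b) = [set (u, b) | u in N1] :|: [set (a, w) | w in N2].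
  apply/setP=> -[u w]; rewrite !inE /cart_rel /= [b == w]eq_sym [a == u]eq_sym.
  apply/idP/orP=> [/orP[/andP[h /eqP->]|/andP[h /eqP->]]|].
  - by left; rewrite imset_f ?inE.
  - by right; rewrite imset_f ?inE.
  by case=> /imsetP[x + [-> ->]]; rewrite inE eqxx => ->; rewrite ?orbT.
rewrite cardsU (_ : _ :&: _ = set0) ?cards0 ?subn0.
  by rewrite !card_imset // => x y [].
apply/setP=> -[u w]; rewrite !inE; apply/negP=> /andP[/imsetP[x hx [-> ->]]].
by case/imsetP=> y _ [xa _]; rewrite xa inE e1_irr in hx.
Qed.
End CartesianProduct.

Lemma ord2_other (i j k : 'I_2) : i != j -> k != i -> k = j.
Proof.
rewrite -!val_eqE => ij ki; apply: val_inj.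
by move: ij ki (ltn_ord i) (ltn_ord j) (ltn_ord k) => /=; lia.
Qed.

Section CompleteMultipartite.
Variables (d : nat) (n : 'I_d -> nat).

Definition part_vtx (i : 'I_d) (k : 'I_(n i)) : Kmp_vert n :=
  Tagged (fun i => 'I_(n i)) k.

Definition part_rep (n_gt0 : forall i, 0 < n i) (i : 'I_d) : Kmp_vert n :=
  part_vtx (Ordinal (n_gt0 i)).

Lemma Kmp_vert_eq (x y : Kmp_vert n) :
  tag x = tag y -> tagged x = tagged y :> nat -> x = y.
Proof. by case: x y => i k [j l] /= eij; subst j => /val_inj->. Qed.

Lemma part_vtx_inj i : injective (@part_vtx i).
Proof. by move=> k l /(congr1 (fun x : Kmp_vert n => val (tagged x)))/val_inj. Qed.

Lemma Kmp_rel_sym : symmetric (@Kmp_rel d n).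
Proof. by move=> x y; rewrite /Kmp_rel eq_sym. Qed.

Lemma card_part_le (T : finType) (f : Kmp_vert n -> T) (S : {set T}) i :
  injective f -> (forall k : 'I_(n i), f (part_vtx k) \in S) -> n i <= #|S|.
Proof.
move=> f_inj fS; rewrite -[n i]card_ord -cardsT.
rewrite -(card_imset _ (inj_comp f_inj (@part_vtx_inj i))).
by apply/subset_leq_card/subsetP=> _ /imsetP[k _ ->]; apply: fS.
Qed.
End CompleteMultipartite.

Section Embedding.
Variables (d : nat) (n : 'I_d -> nat) (V1 V2 : finType) (e1 : rel V1) (e2 : rel V2).
Hypotheses (e1_simple : simple_graph e1) (e2_simple : simple_graph e2).
Variable f : Kmp_vert n -> V1 * V2.
Hypotheses (f_inj : injective f)
  (f_edge : forall x y, Kmp_rel x y -> cart_rel e1 e2 (f x) (f y)).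

Lemma swap_embedding :
  injective (swap_pair \o f) /\
  forall x y, Kmp_rel x y -> cart_rel e2 e1 (swap_pair (f x)) (swap_pair (f y)).
Proof.
split; first exact: inj_comp (can_inj swap_pairK) f_inj.
by move=> x y /f_edge; rewrite cart_rel_swap.
Qed.

Lemma fiber_embedding c : (forall x, (f x).2 = c) -> subgraph_iso (@Kmp_rel d n) e1.
Proof.
move=> fc; exists (fst \o f); split=> [x y /= E | x y /f_edge/cart_rel_snd_eq].
  by apply: f_inj; move: (fc x) (fc y) E; case: (f x) (f y) => [? ?] [? ?] /= -> -> ->.
by apply; rewrite ?fc.
Qed.

Lemma horizontal_spread u v x : Kmp_rel u v -> Kmp_rel x u -> Kmp_rel x v ->
  (f u).2 = (f v).2 -> (f x).2 = (f u).2.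
Proof.
move=> uv xu xv huv.
have [[-> //]|[_ huv1]] := cart_triangle e1_simple e2_simple (f_edge xu) (f_edge uv) (f_edge xv).
have /f_inj eq_uv : f u = f v.
  by move: huv huv1; case: (f u) (f v) => [? ?] [? ?] /= -> ->.
by rewrite eq_uv /Kmp_rel eqxx in uv.
Qed.

Lemma horizontal_triangle_fiber a b c : Kmp_rel a b -> Kmp_rel b c -> Kmp_rel a c ->
  (f a).2 = (f b).2 -> forall x, (f x).2 = (f a).2.
Proof.
move=> ab bc ac hab.
have hca : (f c).2 = (f a).2.
  by apply: horizontal_spread ab _ _ hab; rewrite Kmp_rel_sym.
have hbc : (f b).2 = (f c).2 by rewrite -hab hca.
move=> x; have [xa|xa] := eqVneq (tag x) (tag a).
  have [xb xc] : Kmp_rel x b /\ Kmp_rel x c by rewrite /Kmp_rel xa.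
  by rewrite (horizontal_spread bc xb xc hbc).
have [xb|xb] := eqVneq (tag x) (tag b).
  have [xa' xc] : Kmp_rel x a /\ Kmp_rel x c by rewrite /Kmp_rel xb eq_sym.
  exact: horizontal_spread ac xa' xc (esym hca).
exact: horizontal_spread ab xa xb hab.
Qed.

Lemma offdiag_common_part x y j :
  (f x).1 != (f y).1 -> (f x).2 != (f y).2 -> j != tag x -> j != tag y ->
  forall k : 'I_(n j), f (part_vtx k) \in [set ((f x).1, (f y).2); ((f y).1, (f x).2)].
Proof.
by move=> n1 n2 jx jy k; apply: cart_common_nbr n1 n2 _ _; apply: f_edge; rewrite /Kmp_rel eq_sym.
Qed.

Lemma offdiag_part_le2 x y j :
  (f x).1 != (f y).1 -> (f x).2 != (f y).2 -> j != tag x -> j != tag y -> n j <= 2.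
Proof.
move=> n1 n2 jx jy.
apply: leq_trans (card_part_le f_inj (offdiag_common_part n1 n2 jx jy)) _.
by rewrite cards2; case: (_ != _).
Qed.

Lemma square_parts u v w : Kmp_rel u v -> Kmp_rel u w ->
  (f u).2 = (f v).2 -> (f u).1 = (f w).1 -> 1 < n (tag u) -> forall j, n j <= 2.
Proof.
move=> uv uw huv huw nu_gt1.
have ev : e1 (f u).1 (f v).1 := cart_rel_snd_eq e2_simple (f_edge uv) huv.
have ew : e2 (f u).2 (f w).2 := cart_rel_fst_eq e1_simple (f_edge uw) huw.
have n1 : (f v).1 != (f w).1 by rewrite -huw eq_sym (simple_graph_neq e1_simple ev).
have n2 : (f v).2 != (f w).2 by rewrite -huv (simple_graph_neq e2_simple ew).
(* The part of u maps into the two common neighbours of f v and f w, so two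
   of its vertices again differ in both coordinates and bound the other parts. *)
set a0 := part_vtx (Ordinal (ltnW nu_gt1)); set a1 := part_vtx (Ordinal nu_gt1).
have [m1 m2] : (f a0).1 != (f a1).1 /\ (f a0).2 != (f a1).2.
  have a01 : f a0 != f a1 by rewrite (inj_eq f_inj) (inj_eq (@part_vtx_inj _ _ _)).
  have := mem_set2_neq (offdiag_common_part n1 n2 uv uw _)
                       (offdiag_common_part n1 n2 uv uw _) a01.
  by case=> -[-> ->] /=; [rewrite n1 eq_sym n2 | rewrite eq_sym n1 n2].
move=> j; have [->|ju] := eqVneq j (tag u); first exact: offdiag_part_le2 n1 n2 uv uw.
exact: (offdiag_part_le2 m1 m2 ju ju).
Qed.

Lemma fiber_or_square x y : (forall i, 1 < n i) -> Kmp_rel x y -> (f x).2 = (f y).2 ->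
  (forall z, (f z).2 = (f x).2) \/
  [/\ forall i, n i <= 2, has_edge e1 & has_edge e2].
Proof.
move=> n_gt1 xy hxy.
have [z hz|] := pickP (fun z => (f z).2 != (f x).2); last first.
  by move=> same; left=> z; apply/eqP/negbFE/same.
right; suff [u [v [w [uv uw huv huw]]]] : exists u v w,
    [/\ Kmp_rel u v, Kmp_rel u w, (f u).2 = (f v).2 & (f u).1 = (f w).1].
  have ev := cart_rel_snd_eq e2_simple (f_edge uv) huv.
  have ew := cart_rel_fst_eq e1_simple (f_edge uw) huw.
  by split; [exact: square_parts uv uw huv huw (n_gt1 _) | exists (f u).1, (f v).1
            | exists (f u).2, (f w).2].
have vertical u : Kmp_rel u z -> (f u).2 = (f x).2 -> (f u).1 = (f z).1.
  by move=> /f_edge/cart_relP[[_ fuz] fux|[]//]; rewrite -fuz fux eqxx in hz.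
have [zx|zy] : (tag x != tag z) \/ (tag y != tag z).
  by case: (eqVneq (tag x) (tag z)) => [xz|]; [right; rewrite -xz eq_sym|left].
- by exists x, y, z; split=> //; apply: vertical.
- exists y, x, z; split=> //; first by rewrite Kmp_rel_sym.
  exact: vertical zy (esym hxy).
Qed.

Lemma part_le_maxdeg i j : i != j -> 0 < n i -> n j <= maxdeg e1 + maxdeg e2.
Proof.
move=> ij ni_gt0; set c := part_vtx (Ordinal ni_gt0).
have : n j <= #|cart_nbr e1 e2 (f c)|.
  by apply: card_part_le f_inj _ => k; rewrite inE; apply: f_edge.
rewrite [f c]surjective_pairing card_cart_nbr // => /leq_trans; apply.
by apply: leq_add; apply: leq_bigmax.
Qed.
End Embedding.

Definition cart_Kmp_cases d (n : 'I_d -> nat) (V1 V2 : finType)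
    (e1 : rel V1) (e2 : rel V2) : Prop :=
  [\/ subgraph_iso (@Kmp_rel d n) e1 \/ subgraph_iso (@Kmp_rel d n) e2,
      d = 2 /\ (forall i, n i = 2) /\ has_edge e1 /\ has_edge e2
    | d = 2 /\ exists s, 1 <= s /\
        (exists i j : 'I_d, i != j /\ n i = 1 /\ n j = s) /\
        s <= maxdeg e1 + maxdeg e2].

Lemma cart_Kmp_casesC d (n : 'I_d -> nat) (V1 V2 : finType) (e1 : rel V1) (e2 : rel V2) :
  cart_Kmp_cases n e1 e2 -> cart_Kmp_cases n e2 e1.
Proof.
case=> [[iso|iso] | [d2 sq] | [d2 [s [s_gt0 [parts s_le]]]]].
- by apply: Or31; right.
- by apply: Or31; left.
- by apply: Or32; case: sq => n2 [h1 h2].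
- by apply: Or33; split=> //; exists s; rewrite addnC.
Qed.

Lemma cart_Kmp_cases_of_subgraph_iso d (n : 'I_d -> nat)
    (V1 V2 : finType) (e1 : rel V1) (e2 : rel V2) :
  1 < d -> (forall i, 0 < n i) -> simple_graph e1 -> simple_graph e2 ->
  subgraph_iso (@Kmp_rel d n) (cart_rel e1 e2) -> cart_Kmp_cases n e1 e2.
Proof.
move=> d_gt1 n_gt0 s1 s2 [f [f_inj f_edge]].
set x := part_rep n_gt0 (Ordinal (ltnW d_gt1)); set y := part_rep n_gt0 (Ordinal d_gt1).
have xy : Kmp_rel x y by [].
wlog hxy : V1 V2 e1 e2 s1 s2 f f_inj f_edge / (f x).2 = (f y).2.
  move=> horizontal; case/cart_relP: (f_edge _ _ xy) => -[_ h]; first exact: horizontal h.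
  have [sf_inj sf_edge] := swap_embedding f_inj f_edge.
  exact/cart_Kmp_casesC/(horizontal _ _ _ _ s2 s1 _ sf_inj sf_edge h).
have [d_gt2|d_eq2] : 2 < d \/ d = 2 by lia.
  set z := part_rep n_gt0 (Ordinal d_gt2).
  have [yz xz] : Kmp_rel y z /\ Kmp_rel x z by [].
  apply: Or31; left; apply: (fiber_embedding s2 f_inj f_edge (c := (f x).2)).
  exact: (horizontal_triangle_fiber s1 s2 f_inj f_edge xy yz xz hxy).
clearbody x y; subst d.
have [nx1|nx1] := eqVneq (n (tag x)) 1.
  apply: Or33; split=> //; exists (n (tag y)); do 2!split=> //.
    by exists (tag x), (tag y).
  exact: (part_le_maxdeg s1 f_inj f_edge xy (n_gt0 _)).
have [ny1|ny1] := eqVneq (n (tag y)) 1.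
  have yx : Kmp_rel y x by rewrite Kmp_rel_sym.
  apply: Or33; split=> //; exists (n (tag x)); do 2!split=> //.
    by exists (tag y), (tag x).
  exact: (part_le_maxdeg s1 f_inj f_edge yx (n_gt0 _)).
have n_gt1 i : 1 < n i.
  have [->|/(ord2_other xy)->] := eqVneq i (tag x); by rewrite ltn_neqAle eq_sym ?nx1 ?ny1 n_gt0.
have [fib|[n_le2 h1 h2]] := fiber_or_square s1 s2 f_inj f_edge n_gt1 xy hxy.
  by apply: Or31; left; apply: (fiber_embedding s2 f_inj f_edge fib).
by apply: Or32; split=> //; split=> // i; apply/eqP; rewrite eqn_leq n_le2 n_gt1.
Qed.

Lemma subgraph_iso_cartl (W V1 V2 : finType) (eK : rel W) (e1 : rel V1) (e2 : rel V2) :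
  0 < #|V2| -> subgraph_iso eK e1 -> subgraph_iso eK (cart_rel e1 e2).
Proof.
case/card_gt0P=> b _ [g [g_inj g_edge]]; exists (fun x => (g x, b)).
by split=> [x y [/g_inj] | x y /g_edge e]; rewrite /cart_rel /= ?e ?eqxx.
Qed.

Lemma subgraph_iso_cartr (W V1 V2 : finType) (eK : rel W) (e1 : rel V1) (e2 : rel V2) :
  0 < #|V1| -> subgraph_iso eK e2 -> subgraph_iso eK (cart_rel e1 e2).
Proof.
case/card_gt0P=> a _ [g [g_inj g_edge]]; exists (fun x => (a, g x)).
by split=> [x y [/g_inj] | x y /g_edge e]; rewrite /cart_rel /= ?e ?eqxx ?orbT.
Qed.

Lemma odd_lt2_inj m p : m < 2 -> p < 2 -> odd m = odd p -> m = p.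
Proof. by case: m p => [|[|]] // [|[|]]. Qed.

Lemma K22_subgraph_iso_cart (n : 'I_2 -> nat) (V1 V2 : finType) (e1 : rel V1) (e2 : rel V2) :
  simple_graph e1 -> simple_graph e2 -> (forall i, n i = 2) ->
  has_edge e1 -> has_edge e2 -> subgraph_iso (@Kmp_rel 2 n) (cart_rel e1 e2).
Proof.
move=> s1 s2 n2 [a0 [a1 ea]] [b0 [b1 eb]].
have [ea' eb'] : e1 a1 a0 /\ e2 b1 b0 by rewrite (proj1 s1) (proj1 s2).
have ne_a := simple_graph_neq s1 ea; have ne_b := simple_graph_neq s2 eb.
have pick_inj (T : eqType) (t0 t1 : T) :
    t0 != t1 -> injective (fun c : bool => if c then t1 else t0).
  by move=> ne [] [] //= E; rewrite E eqxx in ne.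
have odd_tag (x y : Kmp_vert n) : Kmp_rel x y -> odd (tag x) != odd (tag y).
  apply: contraNneq => /(odd_lt2_inj (ltn_ord _) (ltn_ord _))/val_inj->.
  by rewrite /Kmp_rel eqxx.
(* (t, k) |-> (a_k, b_(t xor k)): the parts are the two diagonals of
   {a0, a1} x {b0, b1}. *)
exists (fun x : Kmp_vert n => (if odd (tagged x) then a1 else a0,
                  if odd (tag x) (+) odd (tagged x) then b1 else b0)).
split=> [x y [/(pick_inj _ _ _ ne_a) ok] | x y /odd_tag].
  rewrite ok => /(pick_inj _ _ _ ne_b)/addIb ot.
  have lt2 (z : Kmp_vert n) : tagged z < 2 by rewrite -[X in _ < X](n2 (tag z)).
  apply: Kmp_vert_eq; last exact: odd_lt2_inj (lt2 x) (lt2 y) ok.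
  exact/val_inj/(odd_lt2_inj (ltn_ord _) (ltn_ord _) ot).
rewrite /cart_rel /=.
by case: (odd (tag x)) (odd (tag y)) (odd (tagged x)) (odd (tagged y)) => [] [] [] [] //= _;
  rewrite ?eqxx ?ea ?eb ?ea' ?eb' ?orbT.
Qed.

Lemma star_subgraph_iso_cart (n : 'I_2 -> nat) (V1 V2 : finType) (e1 : rel V1) (e2 : rel V2)
    (i j : 'I_2) :
  simple_graph e1 -> simple_graph e2 -> 0 < #|V1| -> 0 < #|V2| ->
  i != j -> n i = 1 -> n j <= maxdeg e1 + maxdeg e2 ->
  subgraph_iso (@Kmp_rel 2 n) (cart_rel e1 e2).
Proof.
move=> s1 s2 V1_gt0 V2_gt0 ij ni1 nj_le.
have [a amax] := eq_bigmax (deg e1) V1_gt0; have [b bmax] := eq_bigmax (deg e2) V2_gt0.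
set N := cart_nbr e1 e2 (a, b).
have nj_N : n j <= size (enum N) by rewrite -cardE card_cart_nbr // -amax -bmax.
have tag_j (x : Kmp_vert n) : tag x != i -> tag x = j := ord2_other ij.
have lt_N (x : Kmp_vert n) : tag x != i -> tagged x < size (enum N).
  by move=> xi; apply: leq_trans nj_N; rewrite -(tag_j x xi).
have tagged_i (x : Kmp_vert n) : tag x == i -> tagged x = 0 :> nat.
  by case: x => t k /= /eqP xi; subst t; move: k; rewrite ni1 => k; rewrite ord1.
pose f (x : Kmp_vert n) := if tag x == i then (a, b) else nth (a, b) (enum N) (tagged x).
have f_N (x : Kmp_vert n) : tag x != i -> f x \in N.
  by move=> xi; rewrite /f (negPf xi) -mem_enum mem_nth ?lt_N.
have ab_N : (a, b) \notin N by rewrite inE cart_rel_irr.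
exists f; split=> [x y | x y xy].
  case: (boolP (tag x == i)) => xi; case: (boolP (tag y == i)) => yi.
  - by move=> _; apply: Kmp_vert_eq; rewrite ?tagged_i // (eqP xi) (eqP yi).
  - by move=> fxy; have := f_N y yi; rewrite -fxy /f xi (negPf ab_N).
  - by move=> fxy; have := f_N x xi; rewrite fxy /f yi (negPf ab_N).
  rewrite /f (negPf xi) (negPf yi) => /eqP; rewrite nth_uniq ?enum_uniq ?lt_N // => /eqP.
  by apply: Kmp_vert_eq; rewrite (tag_j x xi) (tag_j y yi).
case: (boolP (tag x == i)) => xi.
  have yi : tag y != i by rewrite -(eqP xi) eq_sym.
  by have := f_N y yi; rewrite /f xi (negPf yi) inE.
have yi : tag y == i.
  by apply: contraNT xy => yi; rewrite (tag_j x xi) (tag_j y yi).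
by rewrite cart_rel_sym //; have := f_N x xi; rewrite /f yi (negPf xi) inE.
Qed.

Theorem mainTheorem1 (d : nat) (n : 'I_d -> nat)
  (V1 V2 : finType) (e1 : rel V1) (e2 : rel V2) :
  2 <= d -> (forall i, 1 <= n i) ->
  simple_graph e1 -> simple_graph e2 ->
  0 < #|V1| -> 0 < #|V2| ->
  subgraph_iso (@Kmp_rel d n) (cart_rel e1 e2) <->
  [\/ subgraph_iso (@Kmp_rel d n) e1 \/ subgraph_iso (@Kmp_rel d n) e2,
      d = 2 /\ (forall i, n i = 2) /\ has_edge e1 /\ has_edge e2
    | d = 2 /\ exists s, 1 <= s /\
        (exists i j : 'I_d, i != j /\ n i = 1 /\ n j = s) /\
        s <= maxdeg e1 + maxdeg e2].
Proof.
move=> d_gt1 n_gt0 s1 s2 V1_gt0 V2_gt0; split.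
  exact: cart_Kmp_cases_of_subgraph_iso.
case=> [[iso|iso] | [d2 [n2 [h1 h2]]] | [d2 [s [_ [[i [j [ij [ni nj]]]] s_le]]]]].
- exact: subgraph_iso_cartl.
- exact: subgraph_iso_cartr.
- by subst d; apply: K22_subgraph_iso_cart.
- by subst d s; apply: (star_subgraph_iso_cart s1 s2 V1_gt0 V2_gt0 ij).
Qed.
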